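(* Let $N\ge3$. The subspace $\mathbb{Q}(\mu_N)\hat\otimes_{\mathbb{Q}}\mathfrak{dmr}_0^{[N]}$ of $\mathbb{Q}(\mu_N)\langle\langle\widetilde X\rangle\rangle$ is stable under $\widetilde\Delta_\sigma$ for every $\sigma\in G_N$, and the subspace $\mathbb{Q}(\mu_N)\hat\otimes_{\mathbb{Q}}\mathfrak{dmr}_0^{\mu_N}$ of $\mathbb{Q}(\mu_N)\langle\langle X\rangle\rangle$ is stable under $\Delta_\sigma$ for every $\sigma\in G_N$.
   Context: $\zeta_N=\exp(2\pi i/N)$, $\mu_N$ the complex $N$-th roots of unity, $\iota:\{1,\dots,N\}\to\mathbb{Z}/N\mathbb{Z}$ the residue-class bijection. $K\langle\langle\mathcal L\rangle\rangle$: noncommutative formal power series; $(\psi\mid w)$ the coefficient of $w$. Alphabets $X=\{x_0\}\cup\{x_\zeta:\zeta\in\mu_N\}$, $Y=\{y_{k,\zeta}\}$, $\widetilde X=\{\tilde x\}\cup\{\tilde x_\alpha:\alpha\in\mathbb{Z}/N\mathbb{Z}\}$, $\widetilde Y=\{\tilde y_{k,\alpha}\}$ ($k\ge1$), with $y_{k,\zeta}\equiv x_0^{k-1}x_\zeta$, $\tilde y_{k,\alpha}\equiv\tilde x^{k-1}\tilde x_\alpha$; $\pi_Y$, $\pi_{\widetilde Y}$ are the projections along $K\langle\langle X\rangle\rangle x_0$, $K\langle\langle\widetilde X\rangle\rangle\tilde x$. Coproducts: $\widehat\Delta_{sh}$, $\widehat\Delta_{\tilde{sh}}$ make all letters primitive;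 $\widehat\Delta_*(y_{k,\zeta})=y_{k,\zeta}\otimes1+1\otimes y_{k,\zeta}+\sum_{k_1+k_2=k,\,k_i\ge1,\,\zeta_1\zeta_2=\zeta}y_{k_1,\zeta_1}\otimes y_{k_2,\zeta_2}$; $\widehat\Delta_{\tilde*}(\tilde y_{k,\alpha})=\tilde y_{k,\alpha}\otimes1+1\otimes\tilde y_{k,\alpha}+\sum_{k_1+k_2=k,\,k_i\ge1}\tilde y_{k_1,\alpha}\otimes\tilde y_{k_2,\alpha}$. $\mathbf p(x_0^{k_1-1}x_{\zeta_1}\cdots x_0^{k_r-1}x_{\zeta_r}x_0^{k_{r+1}-1})=x_0^{k_1-1}x_{\zeta_1}x_0^{k_2-1}x_{\zeta_1\zeta_2}\cdots x_0^{k_r-1}x_{\zeta_1\cdots\zeta_r}x_0^{k_{r+1}-1}$; $\widetilde{\mathbf q}(\tilde x^{k_1-1}\tilde x_{\alpha_1}\cdots\tilde x^{k_r-1}\tilde x_{\alpha_r}\tilde x^{k_{r+1}-1})=\tilde x^{k_1-1}\tilde x_{\alpha_1-\alpha_2}\cdots\tilde x^{k_{r-1}-1}\tilde x_{\alpha_{r-1}-\alpha_r}\tilde x^{k_r-1}\tilde x_{\alpha_r}\tilde x^{k_{r+1}-1}$. $\mathfrak{dmr}_0^{\mu_N}$: the $\psi\in\mathbb{Q}\langle\langle X\rangle\rangle$ with (i) $(\psi\mid x_0)=(\psi\mid x_1)=0$; (ii) $\psi$ primitive for $\widehat\Delta_{sh}$; (iii) $(\psi\mid x_\zeta-x_{\zeta^{-1}})=0$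 for all $\zeta$; (iv) $\psi_*:=\pi_Y\mathbf p^{-1}(\psi)+\sum_{n\ge2}\frac{(-1)^{n-1}}{n}(\psi\mid x_0^{n-1}x_1)y_{1,1}^n$ primitive for $\widehat\Delta_*$. $\mathfrak{dmr}_0^{[N]}$: the $\widetilde\psi\in\mathbb{Q}\langle\langle\widetilde X\rangle\rangle$ with (i) $(\widetilde\psi\mid\tilde x)=\sum_\alpha(\widetilde\psi\mid\tilde x_\alpha)=0$; (ii) $\widetilde\psi$ primitive for $\widehat\Delta_{\tilde{sh}}$; (iii) $(\widetilde\psi\mid\tilde x_\alpha-\tilde x_{-\alpha})=0$ for all $\alpha$; (iv) $\widetilde\psi_{\tilde*}:=\pi_{\widetilde Y}\widetilde{\mathbf q}^{-1}(\widetilde\psi)+\sum_{n\ge2}\sum_{a,b_1,\dots,b_n=1}^N\frac{(-1)^{n-1}}{nN^{n+1}}(\widetilde\psi\mid\tilde x^{n-1}\tilde x_{\iota(a)})\tilde y_{1,\iota(b_1)}\cdots\tilde y_{1,\iota(b_n)}$ primitive for $\widehat\Delta_{\tilde*}$. $\mathbb{Q}(\mu_N)\hat\otimes_{\mathbb{Q}}V$ denotes the $\mathbb{Q}(\mu_N)$-span of $V$ in the corresponding series algebra over $\mathbb{Q}(\mu_N)$. $G_N=\mathrm{Gal}(\mathbb{Q}(\mu_N)/\mathbb{Q})$; $\sigma\in G_N$ has $\sigma(\zeta_N)=\zeta_N^k$, $k\in\{1,\dots,N-1\}$ coprime to $N$. $\Delta_\sigma(\sum_wc_ww)=\sum_w\sigma(c_w)\delta_k(w)$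 with $\delta_k$ the algebra automorphism $x_0\mapsto x_0$, $x_\zeta\mapsto x_{\zeta^k}$; $\widetilde\Delta_\sigma(\sum_wc_ww)=\sum_w\sigma(c_w)\tilde\delta_k(w)$ with $\tilde\delta_k$ the algebra automorphism $\tilde x\mapsto\tilde x$, $\tilde x_\alpha\mapsto\tilde x_{\iota(k)\alpha}$. *)

From HB Require Import structures.
From mathcomp Require Import all_boot all_order all_algebra all_field.
Set Implicit Arguments. Unset Strict Implicit. Unset Printing Implicit Defensive.
Import Order.TTheory GRing.Theory Num.Theory.
Local Open Scope ring_scope.

(* zeta_N = exp(2 pi i / N): N.-root (-1) has the minimal argument pi/N. *)
Definition zeta (N : nat) : algC := (N.-root (-1)) ^+ 2.

Definition inQmu (N : nat) (z : algC) : Prop :=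
  exists p : {poly rat}, z = (map_poly ratr p).[zeta N].

(* Letters of X:  None = x_0,  Some j = x_{zeta_N^j}  (j : 'Z_N).
   Letters of X~: None = x~,   Some a = x~_a         (a : 'Z_N = Z/NZ).  *)
Definition letter (N : nat) := option 'Z_N.
Definition word (N : nat) := seq (letter N).

(* Letters of Y / Y~: (m, j) stands for y_{m+1, j}, so k = m+1 >= 1. *)
Definition yletter (N : nat) := (nat * 'Z_N)%type.
Definition yword (N : nat) := seq (yletter N).

(* y_{k,j} == x0^{k-1} x_j *)
Definition ytox (N : nat) (u : yword N) : word N :=
  flatten [seq rcons (nseq l.1 None) (Some l.2) | l <- u].

Definition iota (N : nat) (a : nat) : 'Z_N := a%:R.

Fixpoint shuffle {A : Type} (u v : seq A) : seq (seq A) :=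
  match u with
  | [::] => [:: v]
  | a :: u' =>
    let fix sh_v (v : seq A) : seq (seq A) :=
      match v with
      | [::] => [:: u]
      | b :: v' => map (cons a) (shuffle u' v) ++ map (cons b) (sh_v v')
      end in sh_v v
  end.

Fixpoint stuffle {A : Type} (merge : A -> A -> option A) (u v : seq A)
  : seq (seq A) :=
  match u with
  | [::] => [:: v]
  | a :: u' =>
    let fix st_v (v : seq A) : seq (seq A) :=
      match v with
      | [::] => [:: u]
      | b :: v' =>
        map (cons a) (stuffle merge u' v) ++ map (cons b) (st_v v') ++
        (match merge a b with
         | Some c => map (cons c) (stuffle merge u' v')
         | None => [::] end)
      end in st_v v
  end.

(* y_{k1,z1} (x) y_{k2,z2} -> y_{k1+k2, z1 z2} *)
Definition merge_mu (N : nat) (a b : yletter N) : option (yletter N) :=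
  Some ((a.1 + b.1).+1, a.2 + b.2).
(* y~_{k1,a} (x) y~_{k2,a} -> y~_{k1+k2, a}, only for equal indices *)
Definition merge_N (N : nat) (a b : yletter N) : option (yletter N) :=
  if a.2 == b.2 then Some ((a.1 + b.1).+1, a.2) else None.

(* A series S (coefficients in a ring R) is primitive for the completed
   coproduct Delta dual to the product [prod]: for all words u, v,
   (Delta S | u (x) v) = (S | u prod v) equals (S (x) 1 + 1 (x) S | u (x) v). *)
Definition primitive_for {A : eqType} {R : nzRingType}
  (prod : seq A -> seq A -> seq (seq A)) (S : seq A -> R) : Prop :=
  forall u v : seq A,
    \sum_(w <- prod u v) S w =
      (if v == [::] then S u else 0) + (if u == [::] then S v else 0).

Fixpoint pmap_acc (N : nat) (acc : 'Z_N) (w : word N) : word N :=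
  match w with
  | [::] => [::]
  | None :: w' => None :: pmap_acc acc w'
  | Some j :: w' => Some (acc + j) :: pmap_acc (acc + j) w'
  end.
(* p : x_{z1} .. x_{zr} -> x_{z1} x_{z1 z2} .. x_{z1..zr} (x0-blocks kept) *)
Definition pmap (N : nat) (w : word N) : word N := pmap_acc 0 w.

Fixpoint next_index (N : nat) (w : word N) : 'Z_N :=
  match w with
  | [::] => 0
  | None :: w' => next_index w'
  | Some a :: _ => a
  end.
(* q~ : x~_{a1} .. x~_{ar} -> x~_{a1-a2} .. x~_{a(r-1)-ar} x~_{ar} *)
Fixpoint qmap (N : nat) (w : word N) : word N :=
  match w with
  | [::] => [::]
  | None :: w' => None :: qmap w'
  | Some a :: w' => Some (a - next_index w') :: qmap w'
  end.

(* (p^{-1} psi | w) = (psi | p w), (q~^{-1} psi | w) = (psi | q~ w);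
   pi_Y (resp. pi_Y~) keeps exactly the words ytox u. *)

Definition psi_star (N : nat) (psi : word N -> rat) (u : yword N) : rat :=
  psi (pmap (ytox u)) +
  (if (2 <= size u)%N && (u == nseq (size u) (0%N, 0))
   then (-1) ^+ (size u).-1 / (size u)%:R
        * psi (rcons (nseq (size u).-1 None) (Some 0))
   else 0).

(* psi~_{~*}: the coefficient of a word y~_{1,b1}..y~_{1,bn} in
   sum_{b_1..b_n=1}^N y~_{1,iota b1}..y~_{1,iota bn} is 1. *)
Definition psi_tstar (N : nat) (psi : word N -> rat) (u : yword N) : rat :=
  psi (qmap (ytox u)) +
  (if (2 <= size u)%N && all (fun l : yletter N => l.1 == 0%N) u
   then (-1) ^+ (size u).-1 / ((size u)%:R * (N%:R) ^+ (size u).+1)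
        * \sum_(1 <= a < N.+1) psi (rcons (nseq (size u).-1 None) (Some (iota N a)))
   else 0).

Definition dmr0_mu (N : nat) (psi : word N -> rat) : Prop :=
  [/\ psi [:: None] = 0 /\ psi [:: Some 0] = 0,
      primitive_for (@shuffle (letter N)) psi,
      (forall j : 'Z_N, psi [:: Some j] = psi [:: Some (- j)]) &
      primitive_for (stuffle (@merge_mu N)) (psi_star psi)].

Definition dmr0_N (N : nat) (psi : word N -> rat) : Prop :=
  [/\ psi [:: None] = 0 /\ \sum_(a : 'Z_N) psi [:: Some a] = 0,
      primitive_for (@shuffle (letter N)) psi,
      (forall a : 'Z_N, psi [:: Some a] = psi [:: Some (- a)]) &
      primitive_for (stuffle (@merge_N N)) (psi_tstar psi)].

(* Q(mu_N)-span of a set V of Q-series, inside Q(mu_N)<<X>> (series over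
   algC with coefficients in Q(mu_N)) *)
Definition in_span (N : nat) (V : (word N -> rat) -> Prop)
  (S : word N -> algC) : Prop :=
  exists (n : nat) (c : 'I_n -> algC) (phi : 'I_n -> word N -> rat),
    (forall i, inQmu N (c i)) /\ (forall i, V (phi i)) /\
    (forall w, S w = \sum_(i < n) c i * ratr (phi i w)).

(* Delta applied to sum_w c_w w with substitution of letters f and
   coefficient map s: (result | w') = sum_{w : f(w) = w'} s(c_w). *)
Definition subst_series (N : nat) (s : algC -> algC)
  (f : letter N -> letter N) (S : word N -> algC) (w' : word N) : algC :=
  \sum_(t : (size w').-tuple (letter N) | map f t == w') s (S t).

(* delta_k : x_z -> x_{z^k} *)
Definition delta_k (N k : nat) (l : letter N) : letter N :=
  if l is Some j then Some (k%:R * j) else None.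
Definition tdelta_k (N k : nat) (l : letter N) : letter N :=
  if l is Some a then Some (iota N k * a) else None.

(* The letter substitution delta_k is the relabelling a |-> k a of the letter
   indices by a unit of Z/NZ, the same for x_zeta (zeta = zeta_N^a) and for
   x~_a.  Such a relabelling commutes with shuffle and stuffle, with y <-> x,
   with p and q~, and permutes the index set of the regularisation terms of
   psi_* and psi~_{~*}; so dmr_0^{mu_N} and dmr_0^{[N]} are stable under
   precomposition with the inverse relabelling.  Since
   (Delta_sigma S | w) = sigma (S | delta_k^{-1} w) and sigma maps Q(mu_N)
   into itself, the Q(mu_N)-spans are stable as well. *)

From Pilot Require Import Defs.
From HB Require Import structures.
From mathcomp Require Import all_boot all_order all_algebra all_field.
Import Order.TTheory GRing.Theory Num.Theory.
Local Open Scope ring_scope.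

Lemma shuffle_map (A B : Type) (g : A -> B) (u v : seq A) :
  shuffle (map g u) (map g v) = map (map g) (shuffle u v).
Proof.
elim: u v => [|a u IHu] v //=.
elim: v => [|b v IHv] //=.
rewrite map_cat IHv; have := IHu (b :: v); rewrite /= => ->.
by rewrite -!map_comp.
Qed.

Lemma stuffle_map (A B : Type) (mergeA : A -> A -> option A)
    (mergeB : B -> B -> option B) (g : A -> B) :
    (forall a b, mergeB (g a) (g b) = omap g (mergeA a b)) ->
  forall u v, stuffle mergeB (map g u) (map g v) = map (map g) (stuffle mergeA u v).
Proof.
move=> g_merge; elim=> [|a u IHu] v //=.
elim: v => [|b v IHv] //=.
rewrite !map_cat IHv; have := IHu (b :: v); rewrite /= => ->.
rewrite -!map_comp g_merge.
by case: (mergeA a b) => [c|] /=; rewrite ?IHu -?map_comp.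
Qed.

Lemma eq_primitive_for (A : eqType) (R : nzRingType) prod (S1 S2 : seq A -> R) :
  S1 =1 S2 -> primitive_for prod S1 -> primitive_for prod S2.
Proof.
move=> eqS S1_prim u v; rewrite -!eqS -S1_prim.
by apply: eq_bigr => w _; rewrite eqS.
Qed.

Lemma primitive_for_map (A B : eqType) (R : nzRingType) prodA prodB
    (g : A -> B) (S : seq B -> R) :
    (forall u v, prodB (map g u) (map g v) = map (map g) (prodA u v)) ->
  primitive_for prodB S -> primitive_for prodA (fun w => S (map g w)).
Proof.
move=> g_prod S_prim u v.
by rewrite -(big_map (map g) xpredT S) -g_prod S_prim; case: u; case: v.
Qed.

Lemma sum_iota (N : nat) (V : nmodType) (F : 'Z_N -> V) : (1 < N)%N ->
  \sum_(1 <= a < N.+1) F (Defs.iota N a) = \sum_x F x.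
Proof.
move=> N_gt1; rewrite big_nat_recr ?(ltnW N_gt1) //= {2}/Defs.iota pchar_Zp //.
have -> : \sum_x F x = \sum_(0 <= a < N) F (Defs.iota N a).
  rewrite -[X in \sum_(0 <= a < X) _](Zp_cast N_gt1) big_mkord.
  by apply: eq_bigr => i _; rewrite /Defs.iota natr_Zp.
by rewrite [RHS]big_ltn ?(ltnW N_gt1) // addrC.
Qed.

Section Relabelling.

Variables (N : nat) (u : 'Z_N).

Definition scale_letter (l : letter N) : letter N :=
  if l is Some a then Some (u * a) else None.

Definition scale_yletter (l : yletter N) : yletter N := (l.1, u * l.2).

Lemma ytox_scale (y : yword N) :
  ytox (map scale_yletter y) = map scale_letter (ytox y).
Proof.
elim: y => [|l y IHy] //=.
by rewrite /ytox /= map_cat -/(ytox _) -/(ytox _) IHy map_rcons map_nseq.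
Qed.

Lemma next_index_scale (w : word N) :
  next_index (map scale_letter w) = u * next_index w.
Proof. by elim: w => [|[a|] w IHw] /=; rewrite ?mulr0. Qed.

Lemma qmap_scale (w : word N) : qmap (map scale_letter w) = map scale_letter (qmap w).
Proof. by elim: w => [|[a|] w IHw] //=; rewrite IHw ?next_index_scale ?mulrBr. Qed.

Lemma pmap_acc_scale (acc : 'Z_N) (w : word N) :
  pmap_acc (u * acc) (map scale_letter w) = map scale_letter (pmap_acc acc w).
Proof. by elim: w acc => [|[a|] w IHw] acc //=; rewrite -?mulrDr IHw. Qed.

Lemma pmap_scale (w : word N) :
  Defs.pmap (map scale_letter w) = map scale_letter (Defs.pmap w).
Proof. by have := pmap_acc_scale 0 w; rewrite mulr0. Qed.

Hypothesis u_unit : u \is a GRing.unit.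

Lemma scale_yletter_inj : injective scale_yletter.
Proof.
by apply: (can_inj (g := fun l => (l.1, u^-1 * l.2))) => -[m a]; rewrite /= mulKr.
Qed.

Lemma psi_star_scale (psi : word N -> rat) (y : yword N) :
  psi_star (fun w => psi (map scale_letter w)) y = psi_star psi (map scale_yletter y).
Proof.
rewrite /psi_star size_map ytox_scale pmap_scale.
have -> : nseq (size y) (0%N, 0 : 'Z_N) = map scale_yletter (nseq (size y) (0%N, 0)).
  by rewrite map_nseq /scale_yletter /= mulr0.
by rewrite (inj_eq (inj_map scale_yletter_inj)) map_rcons !map_nseq /scale_yletter /= mulr0.
Qed.

Hypothesis N_gt1 : (1 < N)%N.

Lemma psi_tstar_scale (psi : word N -> rat) (y : yword N) :
  psi_tstar (fun w => psi (map scale_letter w)) y = psi_tstar psi (map scale_yletter y).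
Proof.
rewrite /psi_tstar size_map all_map ytox_scale qmap_scale.
congr (_ + _); case: ifP => // _; congr (_ * _).
under eq_bigr do rewrite map_rcons map_nseq /=.
pose F a := psi (rcons (nseq (size y).-1 None) (Some a)).
rewrite (sum_iota _ _ (F \o *%R u)) // (sum_iota _ _ F) //.
by rewrite [RHS](reindex_inj (mulrI u_unit)).
Qed.

Lemma dmr0_mu_scale (psi : word N -> rat) :
  dmr0_mu psi -> dmr0_mu (fun w => psi (map scale_letter w)).
Proof.
case=> [[psi_x0 psi_x1] psi_sh psi_sym psi_st]; split.
- by rewrite /= mulr0.
- exact/primitive_for_map/psi_sh/shuffle_map.
- by move=> a /=; rewrite psi_sym mulrN.
- apply: (@eq_primitive_for _ _ _ (fun y => psi_star psi (map scale_yletter y))).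
    by move=> y; rewrite psi_star_scale.
  apply/primitive_for_map/psi_st => v w; apply: stuffle_map => a b.
  by rewrite /merge_mu /scale_yletter /= mulrDr.
Qed.

Lemma dmr0_N_scale (psi : word N -> rat) :
  dmr0_N psi -> dmr0_N (fun w => psi (map scale_letter w)).
Proof.
case=> [[psi_x0 psi_xsum] psi_sh psi_sym psi_st]; split.
- by rewrite /= (reindex_inj (mulrI u_unit)) in psi_xsum.
- exact/primitive_for_map/psi_sh/shuffle_map.
- by move=> a /=; rewrite psi_sym mulrN.
- apply: (@eq_primitive_for _ _ _ (fun y => psi_tstar psi (map scale_yletter y))).
    by move=> y; rewrite psi_tstar_scale.
  apply/primitive_for_map/psi_st => v w; apply: stuffle_map => a b.
  by rewrite /merge_N /= (inj_eq (mulrI u_unit)); case: ifP.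
Qed.

End Relabelling.

Lemma subst_series_can {N : nat} (s : algC -> algC) {f h : letter N -> letter N} :
  cancel h f -> cancel f h ->
  forall (S : word N -> algC) (w : word N), subst_series s f S w = s (S (map h w)).
Proof.
move=> hK fK S w; rewrite /subst_series (big_pred1 (map_tuple h (in_tuple w))) //.
move=> t /=; apply/eqP/eqP => [map_t|->]; last by rewrite /= mapK.
by apply: val_inj; rewrite /= -[tval t](mapK fK) map_t.
Qed.

Lemma inQmu_rmorph {N k : nat} {s : {rmorphism algC -> algC}} :
  s (zeta N) = zeta N ^+ k -> forall z, inQmu N z -> inQmu N (s z).
Proof.
move=> s_zeta _ [p ->]; exists (p \Po 'X^k).
rewrite -horner_map s_zeta map_comp_poly map_polyXn horner_comp hornerXn.
rewrite -map_poly_comp; congr (horner _ _); apply: eq_map_poly => x /=.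
exact: fmorph_rat.
Qed.

Lemma in_span_subst (N : nat) (V : (word N -> rat) -> Prop)
    (s : {rmorphism algC -> algC}) (f h : letter N -> letter N) (S : word N -> algC) :
    cancel h f -> cancel f h -> (forall z, inQmu N z -> inQmu N (s z)) ->
    (forall psi, V psi -> V (fun w => psi (map h w))) ->
  in_span V S -> in_span V (subst_series s f S).
Proof.
move=> hK fK s_Qmu V_h [n [c [phi [c_Qmu [phi_V S_def]]]]].
exists n, (s \o c), (fun i w => phi i (map h w)); split; [|split].
- by move=> i; apply: s_Qmu.
- by move=> i; apply: V_h.
- move=> w; rewrite (subst_series_can s hK fK) S_def rmorph_sum.
  by apply: eq_bigr => i _; rewrite rmorphM fmorph_rat.
Qed.

Theorem corollary3p15 (N : nat) (hN : (3 <= N)%N) :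
  forall (s : {rmorphism algC -> algC}) (k : nat),
    (0 < k < N)%N -> coprime k N -> s (zeta N) = zeta N ^+ k ->
    (forall S : word N -> algC, in_span (@dmr0_N N) S ->
       in_span (@dmr0_N N) (subst_series s (@tdelta_k N k) S)) /\
    (forall S : word N -> algC, in_span (@dmr0_mu N) S ->
       in_span (@dmr0_mu N) (subst_series s (@delta_k N k) S)).
Proof.
move=> s k _ k_coprime s_zeta.
have N_gt1 : (1 < N)%N by apply: leq_trans hN.
have k_unit : (k%:R : 'Z_N) \is a GRing.unit by rewrite unitZpE // coprime_sym.
pose u := (k%:R : 'Z_N)^-1.
have u_unit : u \is a GRing.unit by rewrite unitrV.
have deltaK : cancel (scale_letter N u) (@delta_k N k) by case=> //= a; rewrite mulVKr.
have deltaV : cancel (@delta_k N k) (scale_letter N u) by case=> //= a; rewrite mulKr.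
have s_Qmu := inQmu_rmorph s_zeta.
(* [tdelta_k N k] is convertible to [delta_k N k], as [iota N k] is [k%:R]. *)
split=> S; apply: in_span_subst deltaK deltaV s_Qmu _ => psi.
- exact: dmr0_N_scale.
- exact: dmr0_mu_scale.
Qed.
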